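(* Let $X,Y$ be random variables with $X$ taking values in $\mathcal{X}$ and $Y\in\{0,1\}$. Let $\mu:\mathcal{X}\to[0,1]$ be measurable and assume the distribution of $\mu(X)$ is supported on all of $[0,1]$. Let $c_0\ge 0$ and $c:\mathcal{X}\to[0,1]$, $c(x)\equiv c_0$. Let $\mathcal{B}=\{x\mapsto\tilde b(\mu(x)) : \tilde b:\mathbb{R}\to\mathbb{R}\}$. Then $(\mu,c)$ is sound with respect to $\mathcal{B}$, i.e. $$\sup_{b\in\mathcal{B}}\mathbb{E}\big[b(X)(\mu(X)-\mathbb{E}[Y\mid X])-|b(X)|c(X)\big]\le 0,$$ if and only if the maximum calibration error of $\mu$ is at most $c_0$, where $$\mathrm{MCE}(\mu)=\max_{u\in[0,1]}\big|\mathbb{E}[Y\mid\mu(X)=u]-u\big|.$$ *)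

From HB Require Import structures.
From mathcomp Require Import all_boot all_order all_algebra.
From mathcomp Require Import all_classical all_reals all_analysis.
Set Implicit Arguments. Unset Strict Implicit. Unset Printing Implicit Defensive.
Import Order.TTheory GRing.Theory Num.Theory.
Import numFieldNormedType.Exports.
Local Open Scope classical_set_scope.
Local Open Scope ring_scope.

(* g : T -> R is a version of the conditional expectation E[Y | Z], i.e.
   E[Y | Z] = g(Z) a.s.: g is measurable, g(Z) is integrable, and
   E[Y 1_{Z in A}] = E[g(Z) 1_{Z in A}] for every measurable A. *)
Definition cond_exp_version {d d' : measure_display} {Omega : measurableType d}
  {R : realType} {T : measurableType d'} (P : probability Omega R)
  (Z : Omega -> T) (Y : Omega -> R) (g : T -> R) : Prop :=
  measurable_fun setT g /\
  P.-integrable setT (EFin \o (g \o Z)) /\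
  forall A : set T, measurable A ->
    (\int[P]_(w in Z @^-1` A) (Y w)%:E = \int[P]_(w in Z @^-1` A) (g (Z w))%:E)%E.

(* Soundness of (mu, c) w.r.t. B = { x |-> bt (mu x) }, with c x = c0 and
   g a version of E[Y | X]:
   sup_b E[ b(X) (mu(X) - E[Y|X]) - |b(X)| c(X) ] <= 0,
   b ranging over the b = bt \o mu for which the expectation is defined
   (bt measurable, bt(mu(X)) integrable). *)
Definition sound_wrt_mu {d d' : measure_display} {Omega : measurableType d}
  {R : realType} {T : measurableType d'} (P : probability Omega R)
  (X : Omega -> T) (mu : T -> R) (c : T -> R) (g : T -> R) : Prop :=
  forall bt : R -> R, measurable_fun setT bt ->
    P.-integrable setT (EFin \o (bt \o (mu \o X))) ->
    (\int[P]_w ((bt (mu (X w)) * (mu (X w) - g (X w))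
                 - `|bt (mu (X w))| * c (X w))%:E) <= 0)%E.

(* MCE(mu) <= c0 : the conditional expectation u |-> E[Y | mu(X) = u]
   (a version of it) satisfies max_{u in [0,1]} |E[Y|mu(X)=u] - u| <= c0. *)
Definition MCE_le {d d' : measure_display} {Omega : measurableType d}
  {R : realType} {T : measurableType d'} (P : probability Omega R)
  (X : Omega -> T) (Y : Omega -> R) (mu : T -> R) (c0 : R) : Prop :=
  exists h : R -> R, cond_exp_version P (mu \o X) Y h /\
    forall u : R, 0 <= u <= 1 -> `|h u - u| <= c0.

From HB Require Import structures.
From mathcomp Require Import all_boot all_order all_algebra.
From mathcomp Require Import all_classical all_reals all_analysis.
From mathcomp Require Import measurable_realfun ring lra.
Set Implicit Arguments. Unset Strict Implicit. Unset Printing Implicit Defensive.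
Import Order.TTheory GRing.Theory Num.Theory.
Import numFieldNormedType.Exports.
Local Open Scope classical_set_scope.
Local Open Scope ring_scope.

(* Write U := mu(X).  A test function b(X) = bt(U) is a function of U, so the
   tower property gives E[b(X) g(X)] = E[b(X) Y] = E[bt(U) h(U)] for versions
   g of E[Y | X] and h of E[Y | U]: soundness can be tested against h instead
   of g.  Testing it with bt = +-1 on the set where +-(u - h(u)) > c0 shows
   |U - h(U)| <= c0 almost surely, and clamping h(u) - u to [-c0, c0] only
   changes h on a null set.  Conversely, |h(u) - u| <= c0 on [0, 1] makes the
   integrand bt(U) (U - h(U)) - |bt(U)| c0 pointwise nonpositive.  The tower
   property compares the pushforwards along the conditioning variable of the
   measures with densities Y and h(U). *)

Section density_measure.
Context d (T : measurableType d) (R : realType).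
Variables (mu : {sigma_finite_measure set T -> \bar R}) (phi : T -> R).
Hypotheses (phi_ge0 : forall x, 0 <= phi x)
  (phi_int : mu.-integrable setT (EFin \o phi)).
Local Open Scope ereal_scope.

Definition density_measure (A : set T) := \int[mu]_(x in A) (phi x)%:E.

Let mphi : measurable_fun setT (EFin \o phi) := measurable_int mu phi_int.

Let density_measure0 : density_measure set0 = 0.
Proof. by rewrite /density_measure integral_set0. Qed.

Let density_measure_ge0 A : 0 <= density_measure A.
Proof. by apply: integral_ge0 => x _; rewrite lee_fin. Qed.

Let density_measure_sigma_additive : semi_sigma_additive density_measure.
Proof. by apply: semi_sigma_additive_nng_induced => // x; rewrite lee_fin. Qed.

HB.instance Definition _ := isMeasure.Build _ _ _ density_measure
  density_measure0 density_measure_ge0 density_measure_sigma_additive.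

Let density_measure_fin : fin_num_fun density_measure.
Proof.
by move=> A mA; apply: integrable_fin_num => //; exact: integrableS phi_int.
Qed.

HB.instance Definition _ := Measure_isFinite.Build _ _ _ density_measure
  density_measure_fin.

Let density_measure_dominates : density_measure `<< mu.
Proof.
apply/null_content_dominatesP => A mA muA0.
by rewrite /density_measure null_set_integral//; exact: measurable_funTS.
Qed.

Let ge0_integral_density_measure (f : T -> \bar R) :
  (forall x, 0 <= f x) -> measurable_fun setT f ->
  \int[density_measure]_x f x = \int[mu]_x (f x * (phi x)%:E).
Proof.
move=> f0 mf; have dom := density_measure_dominates.
(* the Radon-Nikodym derivative of density_measure is phi almost everywhere *)
rewrite -(Radon_Nikodym_SigmaFinite.change_of_variables dom)//.
have iRN := Radon_Nikodym_SigmaFinite.f_integrable dom.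
apply: ae_eq_integral => //.
- by apply: emeasurable_funM => //; exact: measurable_int iRN.
- exact: emeasurable_funM.
- apply: ae_eqe_mul2l; apply: integral_ae_eq => // E _ mE.
  by rewrite -Radon_Nikodym_SigmaFinite.f_integral.
Qed.

Lemma ge0_integral_comp_mul_density d' (S : measurableType d') (Z : T -> S)
    (k : S -> \bar R) : measurable_fun setT Z ->
  (forall y, 0 <= k y) -> measurable_fun setT k ->
  \int[mu]_x (k (Z x) * (phi x)%:E) = \int[pushforward density_measure Z]_y k y.
Proof.
move=> mZ k0 mk; rewrite ge0_integral_pushforward// preimage_setT.
rewrite ge0_integral_density_measure//; last exact: measurableT_comp.
by move=> x; exact: k0.
Qed.

End density_measure.

Section integral_comp_mul.
Context d d' (T : measurableType d) (S : measurableType d') (R : realType).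
Variables (mu : {sigma_finite_measure set T -> \bar R}) (Z : T -> S).
Variables phi1 phi2 : T -> R.
Hypotheses (mZ : measurable_fun setT Z)
  (phi1_ge0 : forall x, 0 <= phi1 x) (phi2_ge0 : forall x, 0 <= phi2 x)
  (phi1_int : mu.-integrable setT (EFin \o phi1))
  (phi2_int : mu.-integrable setT (EFin \o phi2)).
Hypothesis phi12 : forall A, measurable A ->
  (\int[mu]_(x in Z @^-1` A) (phi1 x)%:E = \int[mu]_(x in Z @^-1` A) (phi2 x)%:E)%E.
Local Open Scope ereal_scope.

Let ge0_integral_comp_mul_eq (k : S -> \bar R) :
  (forall y, 0 <= k y) -> measurable_fun setT k ->
  \int[mu]_x (k (Z x) * (phi1 x)%:E) = \int[mu]_x (k (Z x) * (phi2 x)%:E).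
Proof.
move=> k0 mk; rewrite !ge0_integral_comp_mul_density//.
by apply: eq_measure_integral => A mA _; exact: phi12.
Qed.

Let funepos_comp_mul (phi : T -> R) (k : S -> R) : (forall x, 0 <= phi x)%R ->
  (fun x => (k (Z x) * phi x)%:E)^\+ = (fun x => (EFin \o k)^\+ (Z x) * (phi x)%:E).
Proof.
move=> phi0; apply/funext => x.
by rewrite !funeposE /= -!EFin_max -EFinM maxr_pMl// mul0r.
Qed.

Let funeneg_comp_mul (phi : T -> R) (k : S -> R) : (forall x, 0 <= phi x)%R ->
  (fun x => (k (Z x) * phi x)%:E)^\- = (fun x => (EFin \o k)^\- (Z x) * (phi x)%:E).
Proof.
move=> phi0; apply/funext => x.
by rewrite !funenegE /= -!EFin_max -EFinM maxr_pMl// mul0r mulNr.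
Qed.

Lemma integral_comp_mul_eq (k : S -> R) : measurable_fun setT k ->
  \int[mu]_x (k (Z x) * phi1 x)%:E = \int[mu]_x (k (Z x) * phi2 x)%:E.
Proof.
move=> mk; have mEk : measurable_fun setT (EFin \o k) by exact/measurable_EFinP.
rewrite integralE [RHS]integralE.
rewrite !funepos_comp_mul// !funeneg_comp_mul//.
rewrite ge0_integral_comp_mul_eq//; last exact: measurable_funepos.
by rewrite ge0_integral_comp_mul_eq//; exact: measurable_funeneg.
Qed.

End integral_comp_mul.

Definition clamp (R : realType) (a b x : R) : R := Num.max a (Num.min x b).

Lemma clamp_id (R : realType) (a b x : R) : a <= x <= b -> clamp a b x = x.
Proof. by case/andP => ax xb; rewrite /clamp (min_idPl xb) (max_idPr ax). Qed.

Lemma clamp_ge (R : realType) (a b x : R) : a <= clamp a b x.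
Proof. by rewrite /clamp le_max lexx. Qed.

Lemma clamp_le (R : realType) (a b x : R) : a <= b -> clamp a b x <= b.
Proof. by move=> ab; rewrite /clamp ge_max ab ge_min lexx orbT. Qed.

Lemma measurable_clamp d (T : measurableType d) (R : realType) (a b : R)
    (f : T -> R) :
  measurable_fun setT f -> measurable_fun setT (fun x => clamp a b (f x)).
Proof.
move=> mf; apply: measurable_maxr; first exact: measurable_cst.
by apply: measurable_minr => //; exact: measurable_cst.
Qed.

Lemma measurable_set_ltr d (T : measurableType d) (R : realType) (f g : T -> R) :
  measurable_fun setT f -> measurable_fun setT g -> measurable [set x | f x < g x].
Proof.
by move=> mf mg; rewrite -[X in measurable X]setTI; exact: measurable_fun_ltr.
Qed.

Section integrable_facts.
Context d (T : measurableType d) (R : realType) (mu : {measure set T -> \bar R}).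
Local Open Scope ereal_scope.

Lemma integrable_ae_eq (D : set T) (f g : T -> \bar R) : measurable D ->
  mu.-integrable D f -> measurable_fun D g -> ae_eq mu D f g ->
  mu.-integrable D g.
Proof.
move=> mD /integrableP[mf fint] mg fg; apply/integrableP; split => //.
rewrite (ae_eq_integral (abse \o f))//.
- exact: measurableT_comp.
- exact: measurableT_comp.
- exact/ae_eq_abse/ae_eq_sym.
Qed.

Lemma integrable_mulr_bounded (f g : T -> R) :
  mu.-integrable setT (EFin \o f) -> measurable_fun setT g ->
  (forall x, `|g x| <= 1)%R -> mu.-integrable setT (EFin \o (f \* g)%R).
Proof.
move=> fint mg g1; have /measurable_EFinP mf := measurable_int _ fint.
apply: le_integrable fint => //; first exact/measurable_EFinP/measurable_funM.
by move=> x _; rewrite /= lee_fin normrM ler_piMr.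
Qed.

Lemma gt0_integral_le0_ae (D : set T) (f : T -> R) : measurable D ->
  measurable_fun D f -> (forall x, D x -> 0 < f x)%R ->
  \int[mu]_(x in D) (f x)%:E <= 0 -> \forall x \ae mu, ~ D x.
Proof.
move=> mD mf f0 intf.
have mEf : measurable_fun D (EFin \o f) by exact/measurable_EFinP.
have absf : \int[mu]_(x in D) `|(f x)%:E| = \int[mu]_(x in D) (f x)%:E.
  by apply: eq_integral => x /[!inE] Dx; rewrite gee0_abs// lee_fin ltW ?f0.
have /(ae_eq_integral_abs mu mD mEf) [N [mN N0 DN]] :
    \int[mu]_(x in D) `|(f x)%:E| = 0.
  apply/eqP; rewrite eq_le absf intf integral_ge0// => x Dx.
  by rewrite lee_fin ltW ?f0.
exists N; split => // x /= /contrapT Dx; apply: DN => /= /(_ Dx) [] fx0.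
by have := f0 _ Dx; rewrite fx0 ltxx.
Qed.

End integrable_facts.

Section cond_exp_version.
Context d d' (Omega : measurableType d) (S : measurableType d') (R : realType).
Variables (P : probability Omega R) (Z : Omega -> S) (Y : Omega -> R).
Hypotheses (mZ : measurable_fun setT Z) (mY : measurable_fun setT Y)
  (Y01 : forall w, 0 <= Y w <= 1).
Local Open Scope ereal_scope.

Let measurable_preimage (A : set S) : measurable A -> measurable (Z @^-1` A).
Proof. by move=> mA; rewrite -[X in measurable X]setTI; exact: mZ. Qed.

Let Y_int : P.-integrable setT (EFin \o Y).
Proof.
apply: le_integrable (finite_measure_integrable_cst P 1 measurableT) => //.
  exact/measurable_EFinP.
by move=> w _; rewrite /= lee_fin normr1 ger0_norm; case/andP: (Y01 w).
Qed.

Lemma cond_exp_version_ae_eq (psi psi' : S -> R) :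
  cond_exp_version P Z Y psi -> measurable_fun setT psi' ->
  (\forall w \ae P, psi (Z w) = psi' (Z w)) -> cond_exp_version P Z Y psi'.
Proof.
move=> [mpsi [ipsi psiE]] mpsi' psi_psi'.
have ae : ae_eq P setT (EFin \o (psi \o Z)) (EFin \o (psi' \o Z)).
  by apply: filterS psi_psi' => w /= ->.
have mpsi'Z : measurable_fun setT (EFin \o (psi' \o Z)).
  exact/measurable_EFinP/measurableT_comp.
split=> //; split; first exact: integrable_ae_eq ae.
move=> A mA; rewrite psiE// (ae_eq_integral (fun w => (psi' (Z w))%:E))//.
- exact: measurable_preimage.
- by apply: measurable_funTS; exact/measurable_EFinP/measurableT_comp.
- exact: measurable_funTS.
- exact: ae_eq_subset ae.
Qed.

Lemma cond_exp_version_ae01 (psi : S -> R) : cond_exp_version P Z Y psi ->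
  \forall w \ae P, (0 <= psi (Z w) <= 1)%R.
Proof.
move=> [mpsi [ipsi psiE]].
have mpsiZ : measurable_fun setT (psi \o Z) := measurableT_comp mpsi mZ.
have mlt0 := measurable_set_ltr mpsi (measurable_cst (0%R : R)).
have mgt1 := measurable_set_ltr (measurable_cst (1%R : R)) mpsi.
have ipsiD D : measurable D -> P.-integrable D (EFin \o (psi \o Z)).
  by move=> mD; exact: integrableS ipsi.
have ge0 : \forall w \ae P, ~ (psi (Z w) < 0)%R.
  apply: (gt0_integral_le0_ae (measurable_preimage mlt0)
    (f := fun w => - psi (Z w))%R).
  - exact/measurable_funTS/measurable_funN.
  - by move=> w; rewrite oppr_gt0.
  under eq_integral do rewrite EFinN.
  rewrite integralN; last first.
    apply: integrable_add_def; first exact: measurable_preimage.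
    exact/ipsiD/measurable_preimage.
  rewrite -psiE// (@oppe_le0 R) integral_ge0// => w _.
  by rewrite lee_fin; case/andP: (Y01 w).
have le1 : \forall w \ae P, ~ (1 < psi (Z w))%R.
  apply: (gt0_integral_le0_ae (measurable_preimage mgt1)
    (f := fun w => psi (Z w) - 1)%R).
  - exact/measurable_funTS/measurable_funB.
  - by move=> w; rewrite subr_gt0.
  have mD := measurable_preimage mgt1.
  rewrite integralB_EFin//; [|exact: ipsiD|exact: finite_measure_integrable_cst].
  rewrite -psiE// sube_le0; apply: ge0_le_integral => //.
  - by move=> w _; rewrite lee_fin; case/andP: (Y01 w).
  - exact/measurable_funTS/measurable_EFinP.
  - by move=> w _; rewrite lee_fin; case/andP: (Y01 w).
by apply: filterS2 ge0 le1 => w /negP; rewrite -leNgt => -> /negP; rewrite -leNgt.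
Qed.

Lemma cond_exp_version_clamp (psi : S -> R) : cond_exp_version P Z Y psi ->
  cond_exp_version P Z Y (fun s => clamp 0 1 (psi s)).
Proof.
move=> psiZY; have ae01 := cond_exp_version_ae01 psiZY.
apply: cond_exp_version_ae_eq psiZY (measurable_clamp _ _ psiZY.1) _.
by apply: filterS ae01 => w /clamp_id.
Qed.

Definition preimage_integral (A : set S) := \int[P]_(w in Z @^-1` A) (Y w)%:E.

Let preimage_integral0 : preimage_integral set0 = 0.
Proof. by rewrite /preimage_integral preimage_set0 integral_set0. Qed.

Let preimage_integral_ge0 A : 0 <= preimage_integral A.
Proof. by apply: integral_ge0 => w _; rewrite lee_fin; case/andP: (Y01 w). Qed.

Let preimage_integral_sigma_additive : semi_sigma_additive preimage_integral.
Proof.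
move=> F mF tF mUF; rewrite /preimage_integral preimage_bigcup.
apply: semi_sigma_additive_nng_induced.
- exact/measurable_EFinP.
- by move=> w; rewrite lee_fin; case/andP: (Y01 w).
- by move=> n; exact: measurable_preimage.
- apply/trivIsetP => /= i j _ _ ij; rewrite -preimage_setI.
  by move/trivIsetP : tF => /(_ _ _ _ _ ij) ->//; rewrite preimage_set0.
- by rewrite -preimage_bigcup; exact: measurable_preimage.
Qed.

HB.instance Definition _ := isMeasure.Build _ _ _ preimage_integral
  preimage_integral0 preimage_integral_ge0 preimage_integral_sigma_additive.

Let preimage_integral_fin : fin_num_fun preimage_integral.
Proof.
move=> A mA; have mZA := measurable_preimage mA.
by apply: integrable_fin_num => //; exact: integrableS Y_int.
Qed.

HB.instance Definition _ := Measure_isFinite.Build _ _ _ preimage_integral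
  preimage_integral_fin.

Let Z_mfun : {mfun Omega >-> S} := HB.pack Z (isMeasurableFun.Build _ _ _ _ _ mZ).

Let law := distribution P Z_mfun.

Let preimage_integral_dominates : preimage_integral `<< law.
Proof.
apply/null_content_dominatesP => A mA lawA0.
rewrite /preimage_integral null_set_integral//; first exact: measurable_preimage.
exact/measurable_funTS/measurable_EFinP.
Qed.

Let ge0_integral_law (D : set S) (f : S -> \bar R) : measurable D ->
  measurable_fun D f -> (forall s, 0 <= f s) ->
  \int[law]_(s in D) f s = \int[P]_(w in Z @^-1` D) f (Z w).
Proof.
by move=> mD mf f0; rewrite -[RHS]ge0_integral_pushforward// => s _; exact: f0.
Qed.

Lemma cond_exp_version_exists : exists psi, cond_exp_version P Z Y psi.
Proof.
have dom := preimage_integral_dominates.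
pose rn := Radon_Nikodym_SigmaFinite.f preimage_integral law.
have rn_int := Radon_Nikodym_SigmaFinite.f_integrable dom.
have rn_fin := Radon_Nikodym_SigmaFinite.f_fin_num dom.
have rn_ge0 := Radon_Nikodym_SigmaFinite.f_ge0 dom.
have mrn : measurable_fun setT rn := measurable_int _ rn_int.
exists (fine \o rn); split; [exact: measurableT_comp|split].
- apply/integrableP; split.
    exact/measurable_EFinP/measurableT_comp/mZ/measurableT_comp.
  rewrite (eq_integral (fun w => `|rn (Z w)|)); last first.
    by move=> w _; rewrite /= -abse_EFin fineK ?rn_fin.
  rewrite -(preimage_setT Z) -(ge0_integral_law (f := fun s => `|rn s|))//.
    by case/integrableP : rn_int.
  exact: measurableT_comp.
- move=> A mA; rewrite -/(preimage_integral A).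
  rewrite (Radon_Nikodym_SigmaFinite.f_integral dom)//.
  rewrite ge0_integral_law//; last exact: measurable_funTS.
  by apply: eq_integral => w _; rewrite /= fineK ?rn_fin.
Qed.

Lemma integral_comp_mul_cond_exp_version (psi k : S -> R) :
  cond_exp_version P Z Y psi -> measurable_fun setT k ->
  \int[P]_w (k (Z w) * psi (Z w))%:E = \int[P]_w (k (Z w) * Y w)%:E.
Proof.
move=> psiZY mk; have ae01 := cond_exp_version_ae01 psiZY.
(* psi (Z w) lies in [0, 1] only almost surely; the density argument needs a
   density that is nonnegative everywhere *)
have [mclamp [clamp_int clampE]] := cond_exp_version_clamp psiZY.
have mpsiZ : measurable_fun setT (psi \o Z) := measurableT_comp psiZY.1 mZ.
have mkZ : measurable_fun setT (k \o Z) := measurableT_comp mk mZ.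
rewrite (ae_eq_integral (fun w => (k (Z w) * clamp 0 1 (psi (Z w)))%:E))//.
- apply: (integral_comp_mul_eq mZ) => //.
  + by move=> w; exact: clamp_ge.
  + by move=> w; case/andP: (Y01 w).
  + by move=> A mA; rewrite clampE.
- exact/measurable_EFinP/measurable_funM.
- by apply/measurable_EFinP/measurable_funM => //; exact: measurableT_comp mclamp mZ.
- by apply: filterS ae01 => w /clamp_id ->.
Qed.

Lemma integral_sound_cond_exp_version (psi k : S -> R) (m : Omega -> R) (c : R) :
  cond_exp_version P Z Y psi -> measurable_fun setT k ->
  P.-integrable setT (EFin \o (k \o Z)) ->
  measurable_fun setT m -> (forall w, 0 <= m w <= 1)%R ->
  \int[P]_w ((k (Z w) * (m w - psi (Z w)) - `|k (Z w)| * c)%:E) =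
  \int[P]_w ((k (Z w) * (m w - Y w) - `|k (Z w)| * c)%:E).
Proof.
move=> psiZY mk kZ_int mm m01.
have le1_norm (x : R) : (0 <= x <= 1)%R -> (`|x| <= 1)%R.
  by case/andP => x0 x1; rewrite ger0_norm.
pose G w := (k (Z w) * m w - c * `|k (Z w)|)%R.
have G_int : P.-integrable setT (EFin \o G).
  apply: (eq_integrable measurableT
    (fun w => (k (Z w) * m w)%:E - c%:E * `|k (Z w)|%:E)).
    by move=> w _; rewrite /= /G EFinB EFinM.
  apply: (integrableB measurableT).
    exact: (integrable_mulr_bounded (f := k \o Z) kZ_int mm
      (fun w => le1_norm _ (m01 w))).
  exact/integrableZl/integrable_norm.
have kpsi_int : P.-integrable setT (fun w => (k (Z w) * psi (Z w))%:E).
  have [mclamp _] := cond_exp_version_clamp psiZY.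
  apply: (integrable_ae_eq _ (integrable_mulr_bounded kZ_int _ _)) => //.
  - exact: measurableT_comp mclamp mZ.
  - by move=> w; apply: le1_norm; rewrite clamp_ge clamp_le.
  - exact/measurable_EFinP/measurable_funM/measurableT_comp/mZ/psiZY.1/measurableT_comp.
  - by apply: filterS (cond_exp_version_ae01 psiZY) => w /clamp_id /= ->.
have kY_int : P.-integrable setT (fun w => (k (Z w) * Y w)%:E).
  exact: (integrable_mulr_bounded (f := k \o Z) kZ_int mY
    (fun w => le1_norm _ (Y01 w))).
transitivity (\int[P]_w ((G w)%:E - (k (Z w) * psi (Z w))%:E)).
  by apply: eq_integral => w _; rewrite -EFinB /G; congr EFin; ring.
rewrite integralB_EFin// integral_comp_mul_cond_exp_version// -integralB_EFin//.
by apply: eq_integral => w _; rewrite -EFinB /G; congr EFin; ring.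
Qed.

End cond_exp_version.

Definition sound_wrt_outcome d (Omega : measurableType d) (R : realType)
    (P : probability Omega R) (U Y : Omega -> R) (c0 : R) : Prop :=
  forall bt : R -> R, measurable_fun setT bt ->
    P.-integrable setT (EFin \o (bt \o U)) ->
    (\int[P]_w ((bt (U w) * (U w - Y w) - `|bt (U w)| * c0)%:E) <= 0)%E.

Lemma sound_wrt_muP d d' (Omega : measurableType d) (S : measurableType d')
    (R : realType) (P : probability Omega R) (Z : Omega -> S) (Y : Omega -> R)
    (nu psi : S -> R) (c0 : R) :
  measurable_fun setT Z -> measurable_fun setT Y -> (forall w, 0 <= Y w <= 1) ->
  measurable_fun setT nu -> (forall s, 0 <= nu s <= 1) ->
  cond_exp_version P Z Y psi ->
  sound_wrt_mu P Z nu (fun _ => c0) psi <-> sound_wrt_outcome P (nu \o Z) Y c0.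
Proof.
move=> mZ mY Y01 mnu nu01 psiZY.
have E bt : measurable_fun setT bt ->
    P.-integrable setT (EFin \o (bt \o (nu \o Z))) ->
    (\int[P]_w ((bt (nu (Z w)) * (nu (Z w) - psi (Z w))
                 - `|bt (nu (Z w))| * c0)%:E) =
     \int[P]_w ((bt ((nu \o Z) w) * ((nu \o Z) w - Y w)
                 - `|bt ((nu \o Z) w)| * c0)%:E))%E.
  move=> mbt ib.
  apply: (integral_sound_cond_exp_version mZ mY Y01 (k := bt \o nu)) => //.
  - exact: measurableT_comp.
  - exact: measurableT_comp.
by split=> sound bt mbt ib; [rewrite -E|rewrite E] => //; exact: sound.
Qed.

Section score.
Context d (Omega : measurableType d) (R : realType) (P : probability Omega R).
Variables (U Y : Omega -> R) (c0 : R).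
Hypotheses (mU : measurable_fun setT U) (mY : measurable_fun setT Y)
  (U01 : forall w, 0 <= U w <= 1) (Y01 : forall w, 0 <= Y w <= 1)
  (c0_ge0 : 0 <= c0).

Let integral_sound_score (h bt : R -> R) :
  cond_exp_version P U Y h -> measurable_fun setT bt ->
  P.-integrable setT (EFin \o (bt \o U)) ->
  (\int[P]_w ((bt (U w) * (U w - h (U w)) - `|bt (U w)| * c0)%:E) =
   \int[P]_w ((bt (U w) * (U w - Y w) - `|bt (U w)| * c0)%:E))%E.
Proof. by move=> hUY mbt ib; exact: integral_sound_cond_exp_version. Qed.

Lemma MCE_le_sound_wrt_outcome (h : R -> R) : cond_exp_version P U Y h ->
  (forall u, 0 <= u <= 1 -> `|h u - u| <= c0) -> sound_wrt_outcome P U Y c0.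
Proof.
move=> hUY hu bt mbt ib; rewrite -(integral_sound_score hUY)//.
have bt_le w : bt (U w) * (U w - h (U w)) <= `|bt (U w)| * c0.
  by rewrite (le_trans (ler_norm _))// normrM ler_wpM2l// distrC hu.
rewrite (eq_integral
    (fun w => - ((`|bt (U w)| * c0 - bt (U w) * (U w - h (U w)))%:E))%E).
  by rewrite integral_ge0N ?(@oppe_le0 R) ?integral_ge0// => w _;
    rewrite lee_fin subr_ge0.
by move=> w _; rewrite -EFinN; congr EFin; ring.
Qed.

Let sound_wrt_outcome_ae_le (h : R -> R) (s : R) :
  sound_wrt_outcome P U Y c0 -> cond_exp_version P U Y h -> `|s| = 1 ->
  \forall w \ae P, s * (U w - h (U w)) <= c0.
Proof.
move=> sound hUY s1.
have mdev : measurable_fun setT (fun u : R => s * (u - h u)).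
  by apply: measurable_funM => //; exact: measurable_funB hUY.1.
pose A := [set u : R | c0 < s * (u - h u)].
have mA : measurable A := measurable_set_ltr (measurable_cst c0) mdev.
pose bt (u : R) := s * \1_A u.
have mbt : measurable_fun setT bt.
  by apply: measurable_funM => //; exact: measurable_indic.
have ib : P.-integrable setT (EFin \o (bt \o U)).
  apply: (integrable_mulr_bounded (f := cst s)).
    exact: finite_measure_integrable_cst.
    exact: measurableT_comp (measurable_indic mA) mU.
  by move=> w; rewrite indicE; case: (_ \in _); rewrite ?normr1 ?normr0.
have := sound bt mbt ib; rewrite -(integral_sound_score hUY)//.
have mUA : measurable (U @^-1` A) by rewrite -[X in measurable X]setTI; exact: mU.
rewrite (eq_integral
    ((fun w => (s * (U w - h (U w)) - c0)%:E) \_ (U @^-1` A))); last first.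
  move=> w _; rewrite patchE /bt indicE.
  have [UA|nUA] := boolP (U w \in A); first by rewrite ifT// mulr1 s1 mul1r.
  by rewrite ifF ?(mulr0, mul0r, normr0, subr0)//; exact: negbTE.
rewrite -integral_mkcond => le0.
have mexcess : measurable_fun (U @^-1` A) (fun w => s * (U w - h (U w)) - c0).
  apply: measurable_funTS; apply: measurable_funB => //.
  exact: measurableT_comp mdev mU.
have excess_gt0 w : (U @^-1` A) w -> 0 < s * (U w - h (U w)) - c0.
  by rewrite subr_gt0.
apply: filterS (gt0_integral_le0_ae mUA mexcess excess_gt0 le0) => w.
by rewrite leNgt => /negP.
Qed.

Lemma sound_wrt_outcome_MCE_le : sound_wrt_outcome P U Y c0 ->
  exists h, cond_exp_version P U Y h /\ forall u, `|h u - u| <= c0.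
Proof.
move=> sound; have [h1 h1UY] := cond_exp_version_exists P mU mY Y01.
have le1 := @sound_wrt_outcome_ae_le h1 1 sound h1UY (normr1 _).
have leN1 := @sound_wrt_outcome_ae_le h1 (-1) sound h1UY (normrN1 _).
exists (fun u => u + clamp (- c0) c0 (h1 u - u)); split.
- apply: (cond_exp_version_ae_eq mU h1UY).
    apply: measurable_funD => //; apply: measurable_clamp.
    by apply: measurable_funB => //; exact: h1UY.1.
  apply: filterS2 le1 leN1 => w; rewrite mul1r mulN1r => le1 leN1.
  by rewrite clamp_id ?subrKC//; apply/andP; split; lra.
- move=> u; rewrite [u + _]addrC addrK ler_norml clamp_ge clamp_le//.
  by rewrite (le_trans _ c0_ge0)// oppr_le0.
Qed.

End score.

Theorem proposition4 (d d' : measure_display) (Omega : measurableType d)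
  (R : realType) (T : measurableType d') (P : probability Omega R)
  (X : Omega -> T) (Y : Omega -> R) (mu : T -> R) (c0 : R) (g : T -> R) :
  measurable_fun setT X ->
  measurable_fun setT Y ->
  (forall w, Y w = 0 \/ Y w = 1) ->
  measurable_fun setT mu ->
  (forall x, 0 <= mu x <= 1) ->
  (* the law of mu(X) has support all of [0,1] *)
  (forall u : R, 0 <= u <= 1 -> forall e : R, 0 < e ->
     (0 < P [set w | (`|mu (X w) - u| < e)%R])%E) ->
  0 <= c0 -> c0 <= 1 ->
  cond_exp_version P X Y g ->
  (sound_wrt_mu P X mu (fun _ => c0) g <-> MCE_le P X Y mu c0).
Proof.
move=> mX mY Y01 mmu mu01 _ c0_ge0 _ gXY.
have {}Y01 w : 0 <= Y w <= 1 by case: (Y01 w) => ->; rewrite ?lexx ?ler01.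
have mU : measurable_fun setT (mu \o X) := measurableT_comp mmu mX.
have U01 w : 0 <= (mu \o X) w <= 1 := mu01 (X w).
rewrite (sound_wrt_muP c0 mX mY Y01 mmu mu01 gXY).
split=> [/(sound_wrt_outcome_MCE_le mU mY U01 Y01 c0_ge0) [h [hUY hu]]|[h [hUY hu]]].
- by exists h; split=> // u _; exact: hu.
- exact: (MCE_le_sound_wrt_outcome mU mY U01 Y01 hUY hu).
Qed.
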